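(* Let $\{a_l\}_{l\ge0}$ be a sequence of complex numbers and let $a_l^*=\sum_{k=0}^l\binom lk(-1)^ka_k$ for $l\ge0$. For $k\ge0$ set $$A_k(t)=\sum_{l=0}^k\binom kl(-1)^la_lt^{k-l},\qquad A_k^*(t)=\sum_{l=0}^k\binom kl(-1)^la_l^*t^{k-l}.$$ Let $n$ be a positive integer, let $r,s,t$ be complex numbers with $r+s+t=n-1$, and let $x,y,z$ be complex numbers with $x+y+z=1$. Then $$\sum_{k=0}^n(-1)^k\binom rkx^{n-k}\left(\binom {s}{n-k}A_k(y)-(-1)^n\binom t{n-k}A_k^*(z)\right)=0.$$
   Context: For complex $z$ and integer $k\ge0$, $\binom zk=z(z-1)\cdots(z-k+1)/k!$ (with $\binom z0=1$). *)

From HB Require Import structures.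
From mathcomp Require Import all_boot all_order all_algebra.
From mathcomp Require Import complex.
From mathcomp Require Import Rstruct.
Set Implicit Arguments. Unset Strict Implicit. Unset Printing Implicit Defensive.
Import Order.TTheory GRing.Theory Num.Theory.
Local Open Scope ring_scope.

Definition CC := complex Rdefinitions.R.

Definition binomC (z : CC) (k : nat) : CC :=
  (\prod_(i < k) (z - i%:R)) / (k`!)%:R.

Definition astar (a : nat -> CC) (l : nat) : CC :=
  \sum_(k < l.+1) ('C(l, k))%:R * (-1) ^+ k * a k.

Definition Apoly (a : nat -> CC) (k : nat) (t : CC) : CC :=
  \sum_(l < k.+1) ('C(k, l))%:R * (-1) ^+ l * a l * t ^+ (k - l).

From HB Require Import structures.
From mathcomp Require Import all_boot all_order all_algebra.
From mathcomp Require Import Rstruct complex ring.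
Import GRing.Theory Num.Theory.
Local Open Scope ring_scope.

(* Put B_k(u) = sum_l C(k,l) a_l u^(k-l), the binomial transform of a; it satisfies
   B(B(a,u),v) = B(a,u+v), hence A_k(y) = (-1)^k B_k(-y) and A*_k(z) = B_k(z-1) = B_k(-x-y).
   After these substitutions and C(r,k) C(k,l) = C(r,l) C(r-l,k-l), the coefficient of a_l
   in the sum is C(r,l) times the difference of the two sides of
     [w^N] (1 - y w)^(r-l) (1 + x w)^s = [v^N] (1 - (x+y) v)^(r-l) (1 - x v)^t,  N = n - l,
   which holds because r - l + s + t = N - 1 (substitute w = v / (1 - x v) in the
   coefficient extraction).  The identity is proved by induction on N, from the
   recursion (N+1) [w^(N+1)] F = [w^N] F' and a contiguous relation between the
   coefficients of (1 + c w)^r for r, r - 1. *)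

Lemma sum_triangle {V : nmodType} n (F : nat -> nat -> V) :
  \sum_(k < n.+1) \sum_(l < k.+1) F k l =
  \sum_(l < n.+1) \sum_(j < (n - l).+1) F (l + j)%N l.
Proof.
under eq_bigr => k _ do
  rewrite (big_ord_widen_cond n.+1 xpredT (F k)) ?ltn_ord //.
rewrite (exchange_big_dep xpredT) //=; apply: eq_bigr => l _.
rewrite -(big_geq_mkord _ _ xpredT (fun k => F k l)) -{1}[nat_of_ord l]add0n.
rewrite big_addn (subSn (ltnSE (ltn_ord l))) big_mkord.
by apply: eq_bigr => j _; rewrite addnC.
Qed.

Lemma bin_trinomial k m j :
  ('C(k, m + j) * 'C(m + j, m) = 'C(k, m) * 'C(k - m, j))%N.
Proof.
have [le_mj_k | lt_k_mj] := leqP (m + j) k; last first.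
  rewrite bin_small // mul0n.
  have [le_mk | lt_km] := leqP m k; last by rewrite bin_small.
  by rewrite (@bin_small (k - m)) ?muln0 // ltn_subLR.
have le_mk : (m <= k)%N := leq_trans (leq_addr j m) le_mj_k.
have le_j_km : (j <= k - m)%N by rewrite leq_subRL.
have lhsE : ('C(k, m + j) * 'C(m + j, m) * (m`! * j`! * (k - m - j)`!) = k`!)%N.
  transitivity ('C(k, m + j) * ('C(m + j, m) * (m`! * (m + j - m)`!))
                  * (k - (m + j))`!)%N; first by rewrite addKn subnDA; ring.
  by rewrite bin_fact ?leq_addr // -mulnA bin_fact.
have rhsE : ('C(k, m) * 'C(k - m, j) * (m`! * j`! * (k - m - j)`!) = k`!)%N.
  transitivity ('C(k, m) * (m`! * ('C(k - m, j) * (j`! * (k - m - j)`!))))%N.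
    by ring.
  by rewrite bin_fact // bin_fact.
apply/eqP; rewrite -(@eqn_pmul2r (m`! * j`! * (k - m - j)`!)).
  by rewrite lhsE rhsE.
by rewrite !muln_gt0 !fact_gt0.
Qed.

Section BinomialTransform.
Context {R : comPzRingType}.
Implicit Types (b : nat -> R) (t u v : R).

Definition bintrans b t k : R := \sum_(l < k.+1) 'C(k, l)%:R * b l * t ^+ (k - l).

Lemma bintrans_sign b t k :
  bintrans (fun l => (-1) ^+ l * b l) t k = (-1) ^+ k * bintrans b (- t) k.
Proof.
rewrite /bintrans mulr_sumr; apply: eq_bigr => l _.
have -> : (-1) ^+ k = (-1) ^+ l * (-1) ^+ (k - l) :> R.
  by rewrite -exprD subnKC // ltnSE.
by rewrite (exprNn t); ring: (sqrr_sign R (k - l)).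
Qed.

Lemma bintrans_comp b u v k : bintrans (bintrans b u) v k = bintrans b (u + v) k.
Proof.
rewrite /bintrans; under eq_bigr => l _ do rewrite mulr_sumr mulr_suml.
rewrite (sum_triangle k (fun l i =>
  'C(k, l)%:R * ('C(l, i)%:R * b i * u ^+ (l - i)) * v ^+ (k - l))).
apply: eq_bigr => m _.
rewrite addrC exprDn !mulr_sumr; apply: eq_bigr => j _.
have /(congr1 (fun n => n%:R : R)) := bin_trinomial k m j; rewrite !natrM => binE.
by rewrite addKn subnDA -mulr_natr; ring: binE.
Qed.

End BinomialTransform.

Definition ffactR {R : pzRingType} (z : R) k : R := \prod_(i < k) (z - i%:R).

Lemma ffactRD {R : pzRingType} (z : R) m d :
  ffactR z (m + d) = ffactR z m * ffactR (z - m%:R) d.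
Proof.
rewrite /ffactR big_split_ord; congr (_ * _); apply: eq_bigr => i _.
by rewrite natrD opprD addrA.
Qed.

Lemma ffactR1 {R : pzRingType} (z : R) : ffactR z 1 = z.
Proof. by rewrite /ffactR big_ord1 subr0. Qed.

Lemma ffactRS {R : pzRingType} (z : R) k : ffactR z k.+1 = z * ffactR (z - 1) k.
Proof. by rewrite -add1n ffactRD ffactR1. Qed.

Lemma ffactRSr {R : pzRingType} (z : R) k :
  ffactR z k.+1 = ffactR z k * (z - k%:R).
Proof. by rewrite -addn1 ffactRD ffactR1. Qed.

Lemma binomCE z k : binomC z k = ffactR z k / (k`!)%:R.
Proof. by []. Qed.

Lemma natr_fact_neq0 {R : numDomainType} k : (k`!)%:R != 0 :> R.
Proof. by rewrite pnatr_eq0 -lt0n fact_gt0. Qed.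

Lemma binomC0 z : binomC z 0 = 1.
Proof. by rewrite /binomC big_ord0 fact0 divr1. Qed.

Lemma mul_binomC_down z k : z * binomC (z - 1) k = (z - k%:R) * binomC z k.
Proof. by rewrite !binomCE !mulrA -ffactRS ffactRSr [_ * ffactR z k]mulrC. Qed.

Lemma mul_binomC_diag z k : z * binomC (z - 1) k = k.+1%:R * binomC z k.+1.
Proof.
rewrite mul_binomC_down !binomCE ffactRSr factS natrM.
by field; rewrite natr_fact_neq0 nat1r pnatr_eq0.
Qed.

Lemma binomC_trinomial r {k l} : (l <= k)%N ->
  binomC r k * 'C(k, l)%:R = binomC r l * binomC (r - l%:R) (k - l).
Proof.
move=> le_lk; rewrite -(subnKC le_lk) addKn; set d := (k - l)%N.
have factE : ((l + d)`!)%:R = 'C(l + d, l)%:R * ((l`!)%:R * (d`!)%:R) :> CC.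
  by rewrite -!natrM -[in d`!](addKn l d) bin_fact ?leq_addr.
have binC_neq0 : 'C(l + d, l)%:R != 0 :> CC by rewrite pnatr_eq0 -lt0n bin_gt0 leq_addr.
rewrite !binomCE ffactRD factE; field.
by rewrite binC_neq0 !natr_fact_neq0.
Qed.

Definition conv {R : pzSemiRingType} N (f g : nat -> R) : R :=
  \sum_(j < N.+1) f j * g (N - j)%N.

(* [binser c r j] is the coefficient of [w ^ j] in [(1 + c w) ^ r]. *)
Definition binser (c r : CC) (j : nat) : CC := c ^+ j * binomC r j.

Lemma mul_binser_diag c r j : c * r * binser c (r - 1) j = j.+1%:R * binser c r j.+1.
Proof. by rewrite /binser exprS; ring: (mul_binomC_diag r j). Qed.

Lemma mul_binser_down c r j : r * binser c (r - 1) j = (r - j%:R) * binser c r j.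
Proof. by rewrite /binser; ring: (mul_binomC_down r j). Qed.

Lemma conv_binser_deriv N c d r s :
  N.+1%:R * conv N.+1 (binser c r) (binser d s) =
  c * r * conv N (binser c (r - 1)) (binser d s)
  + d * s * conv N (binser c r) (binser d (s - 1)).
Proof.
rewrite /conv mulr_sumr.
have splitE (j : 'I_N.+2) :
    N.+1%:R * (binser c r j * binser d s (N.+1 - j)) =
    j%:R * binser c r j * binser d s (N.+1 - j)
    + binser c r j * ((N.+1 - j)%:R * binser d s (N.+1 - j)).
  by rewrite (natrB _ (ltnSE (ltn_ord j))); ring.
rewrite (eq_bigr _ (fun j _ => splitE j)) big_split /=; congr (_ + _).
  rewrite big_ord_recl /= !mul0r add0r mulr_sumr; apply: eq_bigr => j _.
  by rewrite /bump /= add1n subSS; ring: (mul_binser_diag c r j).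
rewrite big_ord_recr /= subnn !mul0r mulr0 addr0 mulr_sumr; apply: eq_bigr => j _.
by rewrite (subSn (ltnSE (ltn_ord j))); ring: (mul_binser_diag d s (N - j)).
Qed.

Lemma conv_binser_contiguous N c d r s t : r + s + t = N%:R ->
  r * conv N (binser c (r - 1)) (binser d t) + s * conv N (binser c r) (binser d t)
  + t * conv N (binser c r) (binser d (t - 1)) = 0.
Proof.
move=> rstE; rewrite /conv !mulr_sumr -!big_split /=; apply: big1 => j _.
rewrite mulrA mul_binser_down [t * _]mulrCA mul_binser_down.
by rewrite (natrB _ (ltnSE (ltn_ord j))) -rstE; ring.
Qed.

Lemma conv_binser_subst N r s t u x : r + s + t = N%:R - 1 ->
  conv N (binser u r) (binser x s) = conv N (binser (u - x) r) (binser (- x) t).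
Proof.
elim: N r s t => [|N IHN] r s t rstE.
  by rewrite /conv !big_ord1 /binser !binomC0 !expr0 !mulr1.
rewrite -natr1 addrK in rstE.
apply: (@mulfI _ N.+1%:R); first by rewrite pnatr_eq0.
rewrite !conv_binser_deriv (IHN (r - 1) s t) ?(IHN r (s - 1) t) -?rstE; try ring.
have := conv_binser_contiguous N (u - x) (- x) r s t rstE.
move=> /(congr1 (fun e => x * e)); rewrite mulr0 => contE.
by apply/eqP; rewrite -subr_eq0 -contE; apply/eqP; ring.
Qed.

Lemma Apoly_bintrans a k t : Apoly a k t = (-1) ^+ k * bintrans a (- t) k.
Proof. by rewrite -bintrans_sign; apply: eq_bigr => l _; rewrite mulrA. Qed.

Lemma Apoly_astar a k z : Apoly (astar a) k z = bintrans a (z - 1) k.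
Proof.
have astarE l : (-1) ^+ l * astar a l = bintrans a (-1) l.
  have -> : astar a l = Apoly a l 1.
    by apply: eq_bigr => m _; rewrite expr1n mulr1.
  by rewrite Apoly_bintrans mulrA -expr2 sqrr_sign mul1r.
rewrite addrC -bintrans_comp; apply: eq_bigr => l _.
by rewrite -astarE mulrA.
Qed.

Lemma sum_binomC_bintrans (a : nat -> CC) n r s (w u : CC) :
  \sum_(k < n.+1) binomC r k * binomC s (n - k) * w ^+ (n - k) * bintrans a u k =
  \sum_(l < n.+1) a l * binomC r l * conv (n - l) (binser u (r - l%:R)) (binser w s).
Proof.
under eq_bigr do rewrite mulr_sumr.
rewrite (sum_triangle n (fun k l => binomC r k * binomC s (n - k) * w ^+ (n - k)
                                    * ('C(k, l)%:R * a l * u ^+ (k - l)))).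
apply: eq_bigr => l _; rewrite /conv mulr_sumr; apply: eq_bigr => j _.
have binE := binomC_trinomial r (leq_addr j l).
by rewrite addKn in binE; rewrite /binser addKn subnDA; ring: binE.
Qed.

Theorem lemma2p2 (a : nat -> CC) (n : nat) (r s t x y z : CC) :
  (0 < n)%N ->
  r + s + t = n%:R - 1 ->
  x + y + z = 1 ->
  \sum_(k < n.+1)
     (-1) ^+ k * binomC r k * x ^+ (n - k) *
     (binomC s (n - k) * Apoly a k y
      - (-1) ^+ n * binomC t (n - k) * Apoly (astar a) k z) = 0.
Proof.
move=> _ rstE xyzE. (* the identity holds for n = 0 as well *)
have zE : z - 1 = - y - x by rewrite -xyzE; ring.
transitivity
  (\sum_(k < n.+1) binomC r k * binomC s (n - k) * x ^+ (n - k) * bintrans a (- y) k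
   - \sum_(k < n.+1) binomC r k * binomC t (n - k) * (- x) ^+ (n - k)
                     * bintrans a (- y - x) k).
  rewrite -sumrB; apply: eq_bigr => k _.
  have signE : (-1) ^+ n = (-1) ^+ k * (-1) ^+ (n - k) :> CC.
    by rewrite -exprD subnKC // ltnSE.
  by rewrite Apoly_bintrans Apoly_astar zE (exprNn x) signE; ring: (sqrr_sign CC k).
rewrite !sum_binomC_bintrans -sumrB; apply: big1 => l _.
rewrite (@conv_binser_subst _ _ _ t) ?subrr ?mulr0 //.
have nE : n%:R = r + s + t + 1 by rewrite rstE subrK.
by rewrite (natrB _ (ltnSE (ltn_ord l))) nE; ring.
Qed.
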